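(* Let $k\in\mathbb{Z}$, let $m$ be an odd positive integer, and let $p>1$ be an odd integer. Then $$S_{p}^{(k)}(1,m)=\sum_{i=1}^{p-2}\sum_{\nu=0}^{p-i}\binom{p}{\nu}\binom{p-\nu+1}{i}E_{\nu}^{(k)}E_{i}m^{p-i}+(p+1)E_{p}+m^{p}E_{p}^{(k)}(1),$$ where $S_p^{(k)}(1,m):=m^{p}T_{p}^{(k)}(1,m)-2\sum_{\nu=0}^{p}\binom{p}{\nu}E_{\nu}^{(k)}E_{p+1-\nu}m^{\nu-1}$. Equivalently, $$m^{p}T_{p}^{(k)}(1,m)=\sum_{i=1}^{p-2}\sum_{\nu=0}^{p-i}\binom{p}{\nu}\binom{p-\nu+1}{i}E_{\nu}^{(k)}E_{i}m^{p-i}+(p+1)E_{p}+m^{p}E_{p}^{(k)}(1)+2\sum_{\nu=0}^{p}\binom{p}{\nu}E_{\nu}^{(k)}E_{p+1-\nu}m^{\nu-1}.$$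
   Context: Euler polynomials $E_n(x)$ are defined by $\frac{2}{e^t+1}e^{xt}=\sum_{n=0}^{\infty}E_n(x)\frac{t^n}{n!}$ and $E_n=E_n(0)$. For $k\in\mathbb{Z}$, $\mathrm{Ei}_k(x)=\sum_{n=1}^{\infty}\frac{x^n}{n^k(n-1)!}$; the poly-Genocchi polynomials $G_n^{(k)}(x)$ are defined by $\frac{2\,\mathrm{Ei}_k(\log(1+t))}{e^t+1}e^{xt}=\sum_{n=0}^{\infty}G_n^{(k)}(x)\frac{t^n}{n!}$; the poly-Euler polynomials are $E_n^{(k)}(x)=\frac{G_{n+1}^{(k)}(x)}{n+1}$ ($n\ge0$), $E_n^{(k)}=E_n^{(k)}(0)$, and the poly-Euler functions are $\overline{E}_n^{(k)}(x)=E_n^{(k)}(x-[x])$, where $[x]$ is the greatest integer $\le x$. For positive integers $h,m,p$, the poly-Dedekind type DC sum is $T_p^{(k)}(h,m)=2\sum_{\mu=1}^{m-1}(-1)^{\mu}\frac{\mu}{m}\overline{E}_p^{(k)}\big(\frac{h\mu}{m}\big)$. *)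

(* Formal power series are coefficient sequences nat -> R. *)
From mathcomp Require Import all_boot all_order all_algebra.
From mathcomp Require Import reals.
Set Implicit Arguments. Unset Strict Implicit. Unset Printing Implicit Defensive.
Import Order.TTheory GRing.Theory Num.Theory.
Local Open Scope ring_scope.

Section PS.
Variable R : realType.

Definition ps_mul (a b : nat -> R) : nat -> R :=
  fun n => \sum_(i < n.+1) a i * b (n - i)%N.

Fixpoint ps_pow (a : nat -> R) (j : nat) : nat -> R :=
  match j with
  | 0 => fun n => if n == 0%N then 1 else 0
  | j'.+1 => ps_mul a (ps_pow a j')
  end.

Fixpoint inv_seq (a : nat -> R) (n : nat) : seq R :=
  match n with
  | 0 => [:: (a 0%N)^-1]
  | n'.+1 => let s := inv_seq a n' in
     rcons s (- (a 0%N)^-1 * \sum_(j < n'.+1) a j.+1 * nth 0 s (n' - j)%N)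
  end.

Definition ps_inv (a : nat -> R) : nat -> R := fun n => nth 0 (inv_seq a n) n.

(* composition c(L(t)) for L with zero constant term *)
Definition ps_comp (c L : nat -> R) : nat -> R :=
  fun n => \sum_(j < n.+1) c j * ps_pow L j n.

Definition ps_exp (x : R) : nat -> R := fun n => x ^+ n / (n`!)%:R.
Definition ps_half_exp_plus1 : nat -> R :=
  fun n => ((n`!)%:R^-1 + (n == 0%N)%:R) / 2.
Definition ps_two_over_exp1 : nat -> R := ps_inv ps_half_exp_plus1.
Definition ps_log1p : nat -> R :=
  fun n => if n == 0%N then 0 else (-1) ^+ n.+1 / n%:R.
Definition ps_Ei (k : int) : nat -> R :=
  fun n => if n == 0%N then 0 else ((n%:R ^ k) * ((n.-1)`!)%:R)^-1.

(* Euler polynomials: 2/(e^t+1) e^{xt} = sum E_n(x) t^n/n! *)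
Definition EulerPoly (n : nat) (x : R) : R :=
  (n`!)%:R * ps_mul ps_two_over_exp1 (ps_exp x) n.
Definition EulerNum (n : nat) : R := EulerPoly n 0.

Definition polyGenocchi (k : int) (n : nat) (x : R) : R :=
  (n`!)%:R * ps_mul (ps_mul ps_two_over_exp1 (ps_comp (ps_Ei k) ps_log1p))
                    (ps_exp x) n.

Definition polyEuler (k : int) (n : nat) (x : R) : R :=
  polyGenocchi k n.+1 x / (n.+1)%:R.
Definition polyEulerNum (k : int) (n : nat) : R := polyEuler k n 0.

Definition polyEulerFun (k : int) (n : nat) (x : R) : R :=
  polyEuler k n (x - (Num.floor x)%:~R).

Definition polyDC (k : int) (p h m : nat) : R :=
  2 * \sum_(1 <= mu < m) (-1) ^+ mu * (mu%:R / m%:R)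
        * polyEulerFun k p ((h * mu)%:R / m%:R).

Definition polyS (k : int) (p m : nat) : R :=
  m%:R ^+ p * polyDC k p 1 m
  - 2 * \sum_(0 <= nu < p.+1) 'C(p, nu)%:R * polyEulerNum k nu
          * EulerNum (p.+1 - nu) * m%:R ^ (nu%:Z - 1).

End PS.

From mathcomp Require Import all_boot all_order all_algebra.
From mathcomp Require Import boolp reals.
From mathcomp Require Import ring zify.
Set Implicit Arguments. Unset Strict Implicit. Unset Printing Implicit Defensive.
Import Order.TTheory GRing.Theory Num.Theory.
Local Open Scope ring_scope.

(* Both 2/(e^t+1) e^{xt} and 2 Ei_k(log(1+t))/(e^t+1) e^{xt} are Appell
   generating functions, so E_n(x) and E_n^{(k)}(x) expand binomially in x.
   Expanding E_p^{(k)}(mu/m) turns m^p T_p^{(k)}(1,m) into a combination of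
   alternating power sums sum_{mu<m} (-1)^mu mu^N, which the functional
   equation E_N(x+1) + E_N(x) = 2x^N evaluates, for odd m, as
   2 E_N + sum_{i<N} C(N,i) E_i m^{N-i}.  The terms 2 E_N are exactly the ones
   subtracted in S_p^{(k)}(1,m); exchanging the remaining triangular double sum
   and using E_0 = E_0^{(k)} = 1 and E_{p-1} = 0 (p - 1 is even, by the symmetry
   2/(e^{-t}+1) = e^t 2/(e^t+1)) gives the stated form. *)

Lemma natr_fact_neq0 (R : numDomainType) n : (n`!%:R : R) != 0.
Proof. by rewrite pnatr_eq0 -lt0n fact_gt0. Qed.

Lemma expfz_pred (F : fieldType) (x : F) n : x != 0 -> x ^ (n%:Z - 1) = x ^+ n / x.
Proof. by move=> x_neq0; rewrite expfzDr. Qed.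

Lemma take_polyMr (R : nzRingType) n (p q : {poly R}) :
  take_poly n (p * take_poly n q) = take_poly n (p * q).
Proof.
apply/polyP => i; rewrite !coef_take_poly; case: ifP => // lt_in.
rewrite !coefM; apply: eq_bigr => j _; rewrite coef_take_poly.
by rewrite (leq_ltn_trans (leq_subr _ _) lt_in).
Qed.

Lemma take_polyMl (R : comNzRingType) n (p q : {poly R}) :
  take_poly n (take_poly n p * q) = take_poly n (p * q).
Proof. by rewrite mulrC take_polyMr mulrC. Qed.

Lemma sum_triangle_swap (V : nmodType) p (F : nat -> nat -> V) :
  \sum_(0 <= i < p.+1) \sum_(0 <= j < (p - i).+1) F i j =
  \sum_(0 <= j < p.+1) \sum_(0 <= i < (p - j).+1) F i j.
Proof.
have widen (G : nat -> nat -> V) :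
    \sum_(0 <= i < p.+1) \sum_(0 <= j < (p - i).+1) G i j =
    \sum_(0 <= i < p.+1) \sum_(0 <= j < p.+1 | (i + j <= p)%N) G i j.
  apply: eq_big_nat => i /andP[_ lt_ip].
  rewrite (big_nat_widen 0 (p - i).+1 p.+1) ?ltnS ?leq_subr //.
  by apply: eq_bigl => j; rewrite ltnS leq_subRL.
rewrite widen (widen (fun j i => F i j)) (exchange_big_dep_nat xpredT) //.
by apply: eq_bigr => j _; apply: eq_bigl => i; rewrite addnC.
Qed.

Section PowerSeries.
Variable R : realType.
Implicit Types (a b c : nat -> R) (x : R).

Definition ps_one : nat -> R := fun n => (n == 0%N)%:R.

Definition ps_reflect a : nat -> R := fun n => (-1) ^+ n * a n.

Definition ps_poly n a : {poly R} := \poly_(i < n.+1) a i.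

Lemma coef_ps_poly n a i : (i <= n)%N -> (ps_poly n a)`_i = a i.
Proof. by move=> le_in; rewrite coef_poly ltnS le_in. Qed.

(* Coefficients of a product up to degree n only involve the degree-n
   truncations; this transfers the ring laws of {poly R} to ps_mul. *)
Lemma ps_poly_mul n a b :
  ps_poly n (ps_mul a b) = take_poly n.+1 (ps_poly n a * ps_poly n b).
Proof.
apply/polyP => i; rewrite coef_take_poly coef_poly; case: ifP => // lt_in.
rewrite coefM; apply: eq_bigr => j _.
have le_in : (i <= n)%N by rewrite -ltnS.
have le_jn : (j <= n)%N by rewrite (leq_trans _ le_in) // -ltnS.
by rewrite !coef_ps_poly // (leq_trans (leq_subr _ _)).
Qed.

Lemma ps_mulE n a b : ps_mul a b n = (ps_poly n a * ps_poly n b)`_n.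
Proof. by rewrite -(coef_ps_poly _ (leqnn n)) ps_poly_mul coef_take_poly ltnSn. Qed.

Lemma ps_mulC a b : ps_mul a b = ps_mul b a.
Proof. by apply: funext => n; rewrite !ps_mulE mulrC. Qed.

Lemma ps_mulA a b c : ps_mul a (ps_mul b c) = ps_mul (ps_mul a b) c.
Proof.
apply: funext => n; rewrite -[LHS](coef_ps_poly _ (leqnn n)).
rewrite -[RHS](coef_ps_poly _ (leqnn n)) !ps_poly_mul.
by rewrite take_polyMr take_polyMl mulrA.
Qed.

Lemma ps_mul1l a : ps_mul ps_one a = a.
Proof.
apply: funext => n; rewrite /ps_mul big_ord_recl big1 ?addr0 => [|i _].
  by rewrite mul1r subn0.
by rewrite /ps_one /= mul0r.
Qed.

Lemma ps_mulDr a b c n :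
  ps_mul a (fun i => b i + c i) n = ps_mul a b n + ps_mul a c n.
Proof. by rewrite /ps_mul -big_split; apply: eq_bigr => i _; rewrite mulrDr. Qed.

Lemma ps_mulZr a b x n : ps_mul a (fun i => x * b i) n = x * ps_mul a b n.
Proof. by rewrite /ps_mul big_distrr; apply: eq_bigr => i _; rewrite mulrCA. Qed.

Lemma size_inv_seq a n : size (inv_seq a n) = n.+1.
Proof. by elim: n => //= n IHn; rewrite size_rcons IHn. Qed.

Lemma nth_inv_seq a n i : (i <= n)%N -> nth 0 (inv_seq a n) i = ps_inv a i.
Proof.
elim: n => [|n IHn]; first by rewrite leqn0 => /eqP ->.
rewrite leq_eqVlt => /predU1P[-> //|lt_in].
by rewrite /= nth_rcons size_inv_seq lt_in IHn.
Qed.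

Lemma ps_invS a n :
  ps_inv a n.+1 = - (a 0%N)^-1 * \sum_(j < n.+1) a j.+1 * ps_inv a (n - j).
Proof.
rewrite /ps_inv /= nth_rcons size_inv_seq ltnn eqxx; congr (_ * _).
by apply: eq_bigr => j _; rewrite nth_inv_seq // leq_subr.
Qed.

Lemma ps_mul_inv a : a 0%N != 0 -> ps_mul a (ps_inv a) = ps_one.
Proof.
move=> a0_neq0; apply: funext => -[|n]; rewrite /ps_mul.
  by rewrite big_ord1 /ps_inv /= mulfV.
rewrite big_ord_recl subn0 ps_invS mulrA mulrN mulfV // mulN1r.
by rewrite addNr.
Qed.

Lemma ps_inv_unique a b : a 0%N != 0 -> ps_mul a b = ps_one -> b = ps_inv a.
Proof.
move=> a0_neq0 ab1.
rewrite -[b]ps_mul1l -(ps_mul_inv a0_neq0) [ps_mul a _]ps_mulC -ps_mulA ab1.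
by rewrite ps_mulC ps_mul1l.
Qed.

Lemma ps_reflect_mul a b :
  ps_reflect (ps_mul a b) = ps_mul (ps_reflect a) (ps_reflect b).
Proof.
apply: funext => n; rewrite /ps_reflect /ps_mul big_distrr; apply: eq_bigr => i _.
by rewrite mulrACA -exprD subnKC // -ltnS.
Qed.

Lemma ps_reflect_one : ps_reflect ps_one = ps_one.
Proof. by apply: funext => -[|n]; rewrite /ps_reflect /ps_one ?mul1r ?mulr0. Qed.

Lemma ps_mul_exp0 a : ps_mul a (ps_exp 0) = a.
Proof.
rewrite ps_mulC -[RHS]ps_mul1l; congr ps_mul; apply: funext => n.
by rewrite /ps_exp /ps_one expr0n; case: n => [|n]; rewrite ?divr1 ?mul0r.
Qed.

Lemma fact_ps_mul_exp a x n :
  (n`!)%:R * ps_mul a (ps_exp x) n =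
  \sum_(i < n.+1) 'C(n, i)%:R * ((i`!)%:R * a i) * x ^+ (n - i).
Proof.
rewrite /ps_mul /ps_exp big_distrr; apply: eq_bigr => -[i /=]; rewrite ltnS => le_in _.
have fact_neq0 := natr_fact_neq0 R (n - i).
by rewrite -(bin_fact le_in) !natrM; field.
Qed.
End PowerSeries.

Section EulerPolynomials.
Variable R : realType.
Implicit Types (x s : R).

Lemma half_exp_plus1_0 : ps_half_exp_plus1 R 0 = 1.
Proof. by rewrite /ps_half_exp_plus1 invr1 -mulr2n divff ?pnatr_eq0. Qed.

Lemma fact_half_exp_plus1 i :
  (i`!)%:R * ps_half_exp_plus1 R i = (1 + (i == 0%N)%:R) / 2.
Proof.
rewrite /ps_half_exp_plus1 mulrA mulrDr divff ?pnatr_eq0 -?lt0n ?fact_gt0 //.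
by case: i => [|i]; rewrite ?mulr1 ?mulr0.
Qed.

Lemma fact_ps_mul_half_exp s x n :
  (n`!)%:R * ps_mul (fun i => s ^+ i * ps_half_exp_plus1 R i) (ps_exp x) n =
  ((x + s) ^+ n + x ^+ n) / 2.
Proof.
rewrite fact_ps_mul_exp exprDn !big_ord_recl /= !subn0 !bin0 fact0 expr0 !mul1r.
rewrite half_exp_plus1_0 mulr1n mulr1 mul1r.
have -> : \sum_(i < n) 'C(n, i.+1)%:R *
     ((i.+1)`!%:R * (s ^+ i.+1 * ps_half_exp_plus1 R i.+1)) * x ^+ (n - i.+1) =
   (\sum_(i < n) x ^+ (n - i.+1) * s ^+ i.+1 *+ 'C(n, i.+1)) / 2.
  rewrite big_distrl; apply: eq_bigr => i _ /=.
  by rewrite [_`!%:R * _]mulrCA fact_half_exp_plus1 addr0 -mulr_natr; field.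
by field.
Qed.

Lemma fact_ps_exp x n : (n`!)%:R * ps_exp x n = x ^+ n.
Proof. by rewrite /ps_exp mulrC divfK ?natr_fact_neq0. Qed.

Lemma ps_mul_half_two :
  ps_mul (ps_half_exp_plus1 R) (ps_two_over_exp1 R) = ps_one R.
Proof. by rewrite ps_mul_inv // half_exp_plus1_0 oner_neq0. Qed.

Lemma ps_exp_add1_add x :
  (fun n => ps_exp (x + 1) n + ps_exp x n) =
  (fun n => 2 * ps_mul (ps_half_exp_plus1 R) (ps_exp x) n).
Proof.
apply: funext => n; apply: (mulfI (natr_fact_neq0 R n)).
rewrite mulrCA mulrDr !fact_ps_exp.
rewrite [ps_half_exp_plus1 R](_ : _ = fun i => 1 ^+ i * ps_half_exp_plus1 R i).
  by rewrite fact_ps_mul_half_exp; field.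
by apply: funext => i; rewrite expr1n mul1r.
Qed.

Lemma ps_reflect_half_mul_exp1 :
  ps_mul (ps_reflect (ps_half_exp_plus1 R)) (ps_exp 1) = ps_half_exp_plus1 R.
Proof.
apply: funext => n; apply: (mulfI (natr_fact_neq0 R n)).
rewrite fact_ps_mul_half_exp fact_half_exp_plus1 subrr expr0n expr1n.
by rewrite addrC.
Qed.

(* Both sides are inverses of the series (e^{-t} + 1)/2. *)
Lemma ps_reflect_two_over_exp1 :
  ps_reflect (ps_two_over_exp1 R) = ps_mul (ps_two_over_exp1 R) (ps_exp 1).
Proof.
have H0 : ps_reflect (ps_half_exp_plus1 R) 0 != 0.
  by rewrite /ps_reflect half_exp_plus1_0 mulr1 oner_neq0.
rewrite (ps_inv_unique H0 (b := ps_reflect _)); last first.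
  by rewrite -ps_reflect_mul ps_mul_half_two ps_reflect_one.
apply/esym/ps_inv_unique => //.
rewrite [ps_mul (ps_two_over_exp1 R) _]ps_mulC ps_mulA ps_reflect_half_mul_exp1.
exact: ps_mul_half_two.
Qed.

Lemma EulerNumE n : EulerNum R n = (n`!)%:R * ps_two_over_exp1 R n.
Proof. by rewrite /EulerNum /EulerPoly ps_mul_exp0. Qed.

Lemma EulerNum0 : EulerNum R 0 = 1.
Proof.
by rewrite EulerNumE /ps_two_over_exp1 /ps_inv /= half_exp_plus1_0 invr1 mulr1.
Qed.

Lemma EulerPolyE n x :
  EulerPoly n x = \sum_(0 <= i < n.+1) 'C(n, i)%:R * EulerNum R i * x ^+ (n - i).
Proof.
by rewrite /EulerPoly fact_ps_mul_exp big_mkord; under eq_bigr do rewrite -EulerNumE.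
Qed.

Lemma EulerPolyD1 n x : EulerPoly n (x + 1) + EulerPoly n x = 2 * x ^+ n.
Proof.
rewrite /EulerPoly -mulrDr -ps_mulDr ps_exp_add1_add ps_mulZr ps_mulA.
rewrite [ps_mul (ps_two_over_exp1 R) _]ps_mulC.
by rewrite ps_mul_half_two ps_mul1l mulrCA fact_ps_exp.
Qed.

Lemma EulerPoly1 n : EulerPoly n (1 : R) = (-1) ^+ n * EulerNum R n.
Proof. by rewrite /EulerPoly -ps_reflect_two_over_exp1 EulerNumE mulrCA. Qed.

Lemma EulerNum_even n : (0 < n)%N -> ~~ odd n -> EulerNum R n = 0.
Proof.
move=> n_gt0 n_even; have := EulerPolyD1 n 0.
rewrite add0r EulerPoly1 -signr_odd (negbTE n_even) mul1r expr0n eqn0Ngt n_gt0.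
by rewrite -/(EulerNum R n) mulr0 -mulr2n => /eqP; rewrite mulrn_eq0 => /eqP.
Qed.

Lemma alternating_power_sum n m :
  2 * \sum_(0 <= i < m) (-1) ^+ i * (i%:R : R) ^+ n =
  EulerNum R n - (-1) ^+ m * EulerPoly n (m%:R : R).
Proof.
elim: m => [|m IHm]; first by rewrite big_geq // mulr0 mul1r subrr.
rewrite big_nat_recr //= mulrDr IHm -[m.+1%:R]natr1.
have -> : EulerPoly n (m%:R + 1) = 2 * m%:R ^+ n - EulerPoly n (m%:R : R).
  by rewrite -EulerPolyD1 addrK.
by rewrite exprS; ring.
Qed.

Lemma alternating_power_sum_odd n m : odd m ->
  2 * \sum_(0 <= i < m) (-1) ^+ i * (i%:R : R) ^+ n =
  2 * EulerNum R n + \sum_(0 <= i < n) 'C(n, i)%:R * EulerNum R i * (m%:R : R) ^+ (n - i).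
Proof.
move=> m_odd; rewrite alternating_power_sum -signr_odd m_odd mulN1r opprK.
by rewrite EulerPolyE big_nat_recr //= binn subnn mul1r mulr1; ring.
Qed.

End EulerPolynomials.

Section PolyEuler.
Variables (R : realType) (k : int).

Definition polyGenocchi_gf : nat -> R :=
  ps_mul (ps_two_over_exp1 R) (ps_comp (ps_Ei R k) (ps_log1p R)).

Lemma Ei_log1p0 : ps_comp (ps_Ei R k) (ps_log1p R) 0 = 0.
Proof. by rewrite /ps_comp big_ord1 /ps_Ei mul0r. Qed.

Lemma Ei_log1p1 : ps_comp (ps_Ei R k) (ps_log1p R) 1 = 1.
Proof.
rewrite /ps_comp big_ord_recr big_ord1 /= {1}/ps_Ei /= mul0r add0r.
rewrite /ps_mul big_ord_recr big_ord1 /= /ps_log1p /= mul0r add0r.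
by rewrite /ps_Ei /= exp1rz mul1r sqrrN expr1n !invr1 !mulr1.
Qed.

Lemma polyGenocchi_gf0 : polyGenocchi_gf 0 = 0.
Proof. by rewrite /polyGenocchi_gf /ps_mul big_ord1 Ei_log1p0 mulr0. Qed.

Lemma polyEuler_gf n x :
  polyEuler k n x = (n`!)%:R * ps_mul (fun j => polyGenocchi_gf j.+1) (ps_exp x) n.
Proof.
rewrite /polyEuler /polyGenocchi -/polyGenocchi_gf {1}/ps_mul big_ord_recl.
rewrite polyGenocchi_gf0 mul0r add0r factS natrM mulrAC [_ * _ / _]mulrAC.
by rewrite mulfV ?pnatr_eq0 // mul1r.
Qed.

Lemma polyEulerNumE n : polyEulerNum R k n = (n`!)%:R * polyGenocchi_gf n.+1.
Proof. by rewrite /polyEulerNum polyEuler_gf ps_mul_exp0. Qed.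

Lemma polyEulerE n x :
  polyEuler k n x =
  \sum_(0 <= i < n.+1) 'C(n, i)%:R * polyEulerNum R k i * x ^+ (n - i).
Proof.
rewrite polyEuler_gf fact_ps_mul_exp big_mkord.
by under eq_bigr do rewrite -polyEulerNumE.
Qed.

Lemma polyEulerNum0 : polyEulerNum R k 0 = 1.
Proof.
rewrite polyEulerNumE mul1r /polyGenocchi_gf /ps_mul big_ord_recr big_ord1 /=.
rewrite Ei_log1p0 mulr0 addr0 Ei_log1p1 mulr1.
by rewrite /ps_two_over_exp1 /ps_inv /= half_exp_plus1_0 invr1.
Qed.

End PolyEuler.

Section DedekindTypeSum.
Variables (R : realType) (k : int).

Lemma polyEulerFun_frac p mu m : (mu < m)%N ->
  polyEulerFun k p (mu%:R / m%:R : R) = polyEuler k p (mu%:R / m%:R).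
Proof.
move=> lt_mum; rewrite /polyEulerFun.
have m_gt0 : (0 < m%:R :> R) by rewrite ltr0n (leq_ltn_trans _ lt_mum).
suff -> : Num.floor (mu%:R / m%:R : R) = 0 by rewrite subr0.
apply: floor_def; rewrite add0r /= mulr0z mulr1z.
by rewrite divr_ge0 ?ler0n //= ltr_pdivrMr // mul1r ltr_nat.
Qed.

Lemma polyDC1E p m : (0 < m)%N ->
  (m%:R : R) ^+ p * polyDC R k p 1 m =
  2 * \sum_(0 <= nu < p.+1) 'C(p, nu)%:R * polyEulerNum R k nu * m%:R ^ (nu%:Z - 1)
        * \sum_(0 <= mu < m) (-1) ^+ mu * mu%:R ^+ (p - nu).+1.
Proof.
move=> m_gt0; have m_neq0 : (m%:R : R) != 0 by rewrite pnatr_eq0 -lt0n.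
have -> : polyDC R k p 1 m = 2 * \sum_(0 <= mu < m)
    (-1) ^+ mu * (mu%:R / m%:R) * polyEuler k p (mu%:R / m%:R : R).
  rewrite /polyDC [in RHS](big_ltn m_gt0) mul0r mulr0 mul0r add0r.
  congr (2 * _); apply: eq_big_nat => mu /andP[_ lt_mum].
  by rewrite mul1n polyEulerFun_frac.
rewrite mulrCA; congr (2 * _).
rewrite big_distrr /=.
under eq_big_nat => mu _ do rewrite polyEulerE big_distrr big_distrr /=.
rewrite exchange_big_nat; apply: eq_big_nat => nu /andP[_]; rewrite ltnS => le_nup.
rewrite big_distrr; apply: eq_bigr => mu _ /=.
have m_pow_neq0 : (m%:R : R) ^+ (p - nu) != 0 by rewrite expf_neq0.
rewrite expfz_pred //.
rewrite -{1}(subnKC le_nup) exprD exprS expr_div_n.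
by field; rewrite m_pow_neq0 m_neq0.
Qed.

Lemma polyS_triangle p m : (0 < m)%N -> odd m ->
  polyS R k p m =
  \sum_(0 <= nu < p.+1) \sum_(0 <= i < (p - nu).+1)
     'C(p, nu)%:R * 'C(p - nu + 1, i)%:R * polyEulerNum R k nu
       * EulerNum R i * m%:R ^+ (p - i).
Proof.
move=> m_gt0 m_odd; have m_neq0 : (m%:R : R) != 0 by rewrite pnatr_eq0 -lt0n.
rewrite /polyS polyDC1E // -mulrBr -sumrB big_distrr /=.
apply: eq_big_nat => nu /andP[_]; rewrite ltnS => le_nup.
rewrite expfz_pred //.
rewrite mulrBr mulrCA alternating_power_sum_odd // subSn //.
have -> : \sum_(0 <= i < (p - nu).+1) 'C(p, nu)%:R * 'C(p - nu + 1, i)%:R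
      * polyEulerNum R k nu * EulerNum R i * (m%:R : R) ^+ (p - i) =
    'C(p, nu)%:R * polyEulerNum R k nu * (m%:R ^+ nu / m%:R) *
    \sum_(0 <= i < (p - nu).+1) 'C((p - nu).+1, i)%:R * EulerNum R i
      * m%:R ^+ ((p - nu).+1 - i).
  rewrite big_distrr; apply: eq_big_nat => i /andP[_]; rewrite ltnS => le_i.
  have e : (nu + ((p - nu).+1 - i) = (p - i).+1)%N by lia.
  rewrite -[m%:R ^+ (p - i)](mulfK m_neq0) -exprSr -e exprD addn1 /=; ring.
by ring.
Qed.
End DedekindTypeSum.

Theorem theorem11 (R : realType) (k : int) (m p : nat) :
  (0 < m)%N -> odd m -> (1 < p)%N -> odd p ->
  @polyS R k p m =
    \sum_(1 <= i < p.-1)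
       \sum_(0 <= nu < (p - i).+1)
          'C(p, nu)%:R * 'C(p - nu + 1, i)%:R * @polyEulerNum R k nu
            * @EulerNum R i * m%:R ^+ (p - i)
    + (p.+1)%:R * @EulerNum R p + m%:R ^+ p * @polyEuler R k p 1.
Proof.
move=> m_gt0 m_odd p_gt1 p_odd.
rewrite polyS_triangle // sum_triangle_swap.
have [q def_p] : exists q, p = q.+2 by exists p.-2; lia.
have Eq1_eq0 : EulerNum R q.+1 = 0.
  by apply: EulerNum_even => //; rewrite -[~~ _]/(odd q.+2) -def_p.
(* Split off i = p - 1, i = p and i = 0; the last is m^p E_p^{(k)}(1). *)
rewrite def_p big_nat_recr // big_nat_recr //= (big_ltn (ltn0Sn _)) -def_p.
rewrite [X in _ + X + _ = _]big1 => [|nu _]; last by rewrite Eq1_eq0 mulr0 mul0r.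
rewrite subnn big_nat1 bin0 subn0 addn1 binSn polyEulerNum0 expr0 polyEulerE.
rewrite big_distrr /= addr0 !mulr1 mul1r [in RHS]addrC addrA; congr (_ + _ + _).
by apply: eq_big_nat => nu _; rewrite bin0 EulerNum0 expr1n; ring.
Qed.
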